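(* Let $\Delta=\Delta_0*\dots*\Delta_n$ be a regular filtered euclidean simplex ($\Delta_n\ne\emptyset$). Then the chain map $\mu^*_\Delta\colon N^*(\Delta)\to\widetilde N^*(\Delta)$ is injective and its image is exactly $\widetilde N^*_{\overline0}(\Delta)=\{\omega\in\widetilde N^*(\Delta)\mid\|\omega\|_\ell\le0\text{ and }\|d\omega\|_\ell\le0\text{ for all }\ell\in\{1,\dots,n\}\}$; hence $\mu^*_\Delta\colon N^*(\Delta)\to\widetilde N^*_{\overline0}(\Delta)$ is an isomorphism.
   Context: Coefficients in a commutative ring $R$. For an euclidean simplex $\Delta$, $N_*(\Delta),N^*(\Delta)$ are the simplicial chain and cochain complexes, ${\bf 1}_F$ the cochain dual to a face $F$. For a face $F$ of $\Delta$, $(F,0)$ denotes $F$ as a face of the cone $c\Delta=\Delta*[\mathtt v]$, $(F,1)$ denotes the face $cF$, and $(\emptyset,1)=[\mathtt v]$. For a filtered simplex $\Delta=\Delta_0*\dots*\Delta_n$ (join decomposition, some $\Delta_i$ possibly empty), $\widetilde N^*(\Delta)=N^*(c\Delta_0)\otimes\dots\otimes N^*(c\Delta_{n-1})\otimes N^*(\Delta_n)$ and $\widetilde N_*(\Delta)=N_*(c\Delta_0)\otimes\dots\otimes N_*(c\Delta_{n-1})\otimes N_*(\Delta_n)$, with bases ${\bf 1}_{(F,\varepsilon)}={\bf 1}_{(F_0,\varepsilon_0)}\otimes\dots\otimes{\bf 1}_{(F_{n-1},\varepsilon_{n-1})}\otimes{\bf 1}_{F_n}$ resp. $(F_0,\varepsilon_0)\otimes\dots\otimes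 F_n$ ($\varepsilon_i\in\{0,1\}$, $F_i$ a face of $\Delta_i$ or empty with $\varepsilon_i=1$, $\varepsilon_n=0$). For $\ell\in\{1,\dots,n\}$, $\|{\bf 1}_{(F,\varepsilon)}\|_\ell=-\infty$ if $\varepsilon_{n-\ell}=1$, and $=\sum_{i>n-\ell}(\dim F_i+\varepsilon_i)$ if $\varepsilon_{n-\ell}=0$ (with $\dim\emptyset=-1$); for $\omega=\sum_b\lambda_b{\bf 1}_{(F_b,\varepsilon_b)}$, $\lambda_b\ne0$, $\|\omega\|_\ell=\max_b\|{\bf 1}_{(F_b,\varepsilon_b)}\|_\ell$, and $\|0\|_\ell=-\infty$. The chain map $\mu^\Delta_*\colon\widetilde N_*(\Delta)\to N_*(\Delta)$ sends $(F_0,\varepsilon_0)\otimes\dots\otimes(F_{n-1},\varepsilon_{n-1})\otimes F_n$ to the face $F_0*\dots*F_\ell$ of $\Delta$, where $\ell$ is the least $j$ with $\varepsilon_j=0$, if $\sum_i(\dim F_i+\varepsilon_i)=\dim(F_0*\dots*F_\ell)$, and to $0$ otherwise; $\mu^*_\Delta$ is its dual. *)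

From HB Require Import structures.
From mathcomp Require Import all_boot all_order all_algebra.
Set Implicit Arguments. Unset Strict Implicit. Unset Printing Implicit Defensive.
Import Order.TTheory GRing.Theory Num.Theory.
Local Open Scope ring_scope.

(** It is given by [n] and [k : 'I_n.+1 -> nat], [k i] = number of vertices of
  Delta_i (so dim Delta_i = k i - 1; Delta_i is empty iff k i = 0).
  The vertices of Delta are the ordinals of 'I_(nverts k), ordered as
  Delta_0's vertices, then Delta_1's, ..., then Delta_n's (join order);
  [block k i] is the vertex set of Delta_i. *)

Definition nverts (n : nat) (k : 'I_n.+1 -> nat) : nat := (\sum_(i < n.+1) k i)%N.

Definition offset (n : nat) (k : 'I_n.+1 -> nat) (i : 'I_n.+1) : nat :=
  (\sum_(j < n.+1 | (j < i)%N) k j)%N.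

Definition block (n : nat) (k : 'I_n.+1 -> nat) (i : 'I_n.+1) : {set 'I_(nverts k)} :=
  [set x : 'I_(nverts k) | (offset k i <= x < offset k i + k i)%N].

(** Faces of Delta (nonempty sets of vertices): basis of N_*(Delta). *)
Definition face (n : nat) (k : 'I_n.+1 -> nat) : finType :=
  {F : {set 'I_(nverts k)} | F != set0}.

Definition pos (N : nat) (S : {set 'I_N}) (x : 'I_N) : nat :=
  #|[set y in S | (y < x)%N]|.

(** Coefficient of the face G in the boundary of the face F in N_*(Delta):
    d[x_0..x_p] = sum_t (-1)^t [x_0..^x_t..x_p]. *)
Definition face_bdry (n : nat) (k : 'I_n.+1 -> nat) (R : pzRingType)
    (F G : face k) : R :=
  \sum_(x in val F)
     (if val G == val F :\ x then (-1) ^+ pos (val F) x else 0).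

(** Basis of  N~_*(Delta) = N_*(cDelta_0) (x) ... (x) N_*(cDelta_(n-1)) (x) N_*(Delta_n).
  A basis element (F_0,e_0) (x) ... (x) (F_(n-1),e_(n-1)) (x) F_n is encoded by the
  pair (F, e) where F = F_0 u ... u F_n (so F_i = F :&: block k i) and
  e = { i | e_i = 1 }.  Validity: F_i empty forces e_i = 1, and e_n = 0
  (hence F_n is nonempty). *)
Definition tvalid (n : nat) (k : 'I_n.+1 -> nat)
    (p : {set 'I_(nverts k)} * {set 'I_n.+1}) : bool :=
  [forall i : 'I_n.+1, (p.1 :&: block k i == set0) ==> (i \in p.2)]
  && (ord_max \notin p.2).

Definition tbasis (n : nat) (k : 'I_n.+1 -> nat) : finType :=
  {p : {set 'I_(nverts k)} * {set 'I_n.+1} | tvalid p}.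

Definition tF (n : nat) (k : 'I_n.+1 -> nat) (a : tbasis k) := (val a).1.
Definition te (n : nat) (k : 'I_n.+1 -> nat) (a : tbasis k) := (val a).2.

(** dim F_i + e_i  (with dim emptyset = -1); nonnegative by validity. *)
Definition cdim (n : nat) (k : 'I_n.+1 -> nat) (a : tbasis k) (i : 'I_n.+1) : nat :=
  (#|tF a :&: block k i| + (i \in te a)).-1.

(** Koszul sign exponent: degree of the factors before the i-th one. *)
Definition prefix (n : nat) (k : 'I_n.+1 -> nat) (a : tbasis k) (i : 'I_n.+1) : nat :=
  (\sum_(j < n.+1 | (j < i)%N) cdim a j)%N.

(** Coefficient of b in the boundary of a in N~_*(Delta) (tensor product
  differential with Koszul signs; in the cone cF_i = F_i * [v] the cone
  vertex v is the last vertex):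
  - removing a vertex x of F_i (i = block of x), sign (-1)^(prefix + pos of x in F_i);
  - removing the cone vertex of (F_i,1), giving (F_i,0), sign (-1)^(prefix + #|F_i|).
  Terms that would be the empty face are excluded since b ranges over valid
  basis elements. *)
Definition tbdry (n : nat) (k : 'I_n.+1 -> nat) (R : pzRingType)
    (a b : tbasis k) : R :=
  \sum_(i < n.+1) \sum_(x in tF a :&: block k i)
      (if (tF b == tF a :\ x) && (te b == te a)
       then (-1) ^+ (prefix a i + pos (tF a :&: block k i) x) else 0)
  + \sum_(i < n.+1)
      (if (i \in te a) && (tF b == tF a) && (te b == te a :\ i)
       then (-1) ^+ (prefix a i + #|tF a :&: block k i|) else 0).

(** mu_* : least l with e_l = 0, and the face F_0 * ... * F_l. *)
Definition lead (n : nat) (k : 'I_n.+1 -> nat) (a : tbasis k) : 'I_n.+1 :=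
  [arg min_(j < ord_max | j \notin te a) (j : nat)].

Definition mu_face (n : nat) (k : 'I_n.+1 -> nat) (a : tbasis k) : {set 'I_(nverts k)} :=
  tF a :&: \bigcup_(j < n.+1 | (j <= lead a)%N) block k j.

Definition mu_coef (n : nat) (k : 'I_n.+1 -> nat) (R : pzRingType)
    (a : tbasis k) (G : face k) : R :=
  if (val G == mu_face a)
     && ((\sum_(i < n.+1) cdim a i)%N == #|mu_face a|.-1)
  then 1 else 0.

(** Cochains: N^*(Delta) and N~^*(Delta) as functions on the bases
  (omega = sum_b omega(b) 1_b); the coboundary is the dual of the boundary. *)
Definition cochain (n : nat) (k : 'I_n.+1 -> nat) (R : pzRingType) :=
  {ffun face k -> R}.
Definition tcochain (n : nat) (k : 'I_n.+1 -> nat) (R : pzRingType) :=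
  {ffun tbasis k -> R}.

Definition tcobdry (n : nat) (k : 'I_n.+1 -> nat) (R : pzRingType)
    (w : tcochain k R) : tcochain k R :=
  [ffun a => \sum_(b : tbasis k) tbdry R a b * w b].

Definition mu_star (n : nat) (k : 'I_n.+1 -> nat) (R : pzRingType)
    (w : cochain k R) : tcochain k R :=
  [ffun a => \sum_(G : face k) mu_coef R a G * w G].

(** The perverse degree ||.||_l with values in Z u {-oo} (None = -oo). *)
Definition omax (x y : option int) : option int :=
  match x, y with
  | None, _ => y
  | _, None => x
  | Some u, Some v => Some (Num.max u v)
  end.

Definition ole0 (x : option int) : bool :=
  if x is Some u then u <= 0 else true.

Definition bnorm (n : nat) (k : 'I_n.+1 -> nat) (l : nat) (a : tbasis k) : option int :=
  if (inord (n - l) : 'I_n.+1) \in te a then None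
  else Some (\sum_(i < n.+1 | (n - l < i)%N) ((#|tF a :&: block k i|%:Z - 1)
                                              + (i \in te a)%:Z)).

Definition tnorm (n : nat) (k : 'I_n.+1 -> nat) (R : pzRingType) (l : nat)
    (w : tcochain k R) : option int :=
  \big[omax/None]_(a : tbasis k | w a != 0) bnorm l a.

Definition tN0 (n : nat) (k : 'I_n.+1 -> nat) (R : pzRingType)
    (w : tcochain k R) : Prop :=
  forall l : nat, (1 <= l <= n)%N ->
    ole0 (tnorm l w) /\ ole0 (tnorm l (tcobdry w)).

From Pilot Require Import Defs.
From HB Require Import structures.
From mathcomp Require Import all_boot all_order all_algebra.
From mathcomp Require Import zify.
Set Implicit Arguments. Unset Strict Implicit. Unset Printing Implicit Defensive.
Import Order.TTheory GRing.Theory Num.Theory.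

(* A basis element a = (F, e) of N~^*(Delta) has all perverse degrees ||1_a||_l <= 0 iff it is
   allowable: every factor after the leading one (the first with e_i = 0) is a single point,
   a vertex or a cone vertex.  The dimension condition in mu_* is the same condition, so mu^* v
   vanishes off allowable elements and equals v(F_0 * ... * F_l) on them.  At a non-allowable c,
   all terms of d(mu^* v)(c) vanish except when c has a two-point factor beyond the leading one;
   then the two surviving terms are the values of mu^* v at the two faces of that factor, which
   have the same mu-face, and they cancel.  Regularity makes every face of Delta the mu-face of
   an allowable element, whence injectivity.  Conversely, if w and dw are supported on allowable
   elements, dw = 0 at the union of two allowable elements differing in one factor shows that w
   agrees on them; changing the factors one at a time, w is constant on the allowable elements
   with a given mu-face, so w = mu^* v. *)

Section Blocks.
Variables (n : nat) (k : 'I_n.+1 -> nat).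

Let blen (j : nat) : nat := k (inord j).
Let bstart (m : nat) : nat := (\sum_(0 <= j < m) blen j)%N.

Let offsetE (i : 'I_n.+1) : offset k i = bstart i.
Proof.
rewrite /offset /bstart big_mkord (big_ord_widen _ _ (ltnW (ltn_ord i))).
by apply: eq_bigr => j _; rewrite /blen inord_val.
Qed.

Let nvertsE : nverts k = bstart n.+1.
Proof.
by rewrite /nverts /bstart big_mkord; apply: eq_bigr => j _; rewrite /blen inord_val.
Qed.

Let bstartS m : bstart m.+1 = bstart m + blen m.
Proof. by rewrite /bstart big_nat_recr. Qed.

Let bstart_leq i j : i < j -> bstart i + blen i <= bstart j.
Proof.
move=> lt_ij; rewrite -bstartS /bstart (big_cat_nat (leq0n i.+1) lt_ij) /=.
exact: leq_addr.
Qed.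

Let bstart_cover x m : x < bstart m ->
  exists2 i, i < m & bstart i <= x < bstart i + blen i.
Proof.
elim: m => [|m IH]; first by rewrite /bstart big_geq.
rewrite bstartS => lt_x; case: (ltnP x (bstart m)) => [/IH [i lt_im hi]|ge_x].
  by exists i => //; apply: ltnW.
by exists m; rewrite ?ge_x.
Qed.

Let mem_blockE (x : 'I_(nverts k)) i :
  (x \in block k i) = (bstart i <= x < bstart i + blen i).
Proof. by rewrite inE offsetE /blen inord_val. Qed.

Lemma block_cover (x : 'I_(nverts k)) : exists i, x \in block k i.
Proof.
have := ltn_ord x; rewrite {2}nvertsE => /bstart_cover [i lt_in hi].
by exists (Ordinal lt_in); rewrite mem_blockE.
Qed.

Lemma block_uniq (x : 'I_(nverts k)) i j :
  x \in block k i -> x \in block k j -> i = j.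
Proof.
rewrite !mem_blockE => /andP [hi1 hi2] /andP [hj1 hj2]; apply/val_inj => /=.
case: (ltngtP i j) => // [/bstart_leq | /bstart_leq]; lia.
Qed.

Lemma exists_mem_block (i : 'I_n.+1) : 0 < k i -> exists x : 'I_(nverts k), x \in block k i.
Proof.
move=> k_gt0; have lt_off : offset k i < nverts k.
  rewrite offsetE nvertsE; apply: leq_trans (bstart_leq (ltn_ord i)).
  by rewrite /blen inord_val -addn1 leq_add2l.
by exists (Ordinal lt_off); rewrite inE /= leqnn -{1}[offset k i]addn0 ltn_add2l.
Qed.

Definition block_of (x : 'I_(nverts k)) : 'I_n.+1 :=
  odflt ord0 [pick i | x \in block k i].

Lemma mem_block x i : (x \in block k i) = (block_of x == i).
Proof.
rewrite /block_of; case: pickP => [j hj|none] /=.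
  by apply/idP/eqP => [/(block_uniq hj)|<-].
by case: (block_cover x) => j hj; have := none j; rewrite hj.
Qed.

Lemma mem_block_of x : x \in block k (block_of x).
Proof. by rewrite mem_block. Qed.

Lemma block_of_setI (A : {set 'I_(nverts k)}) x i : x \in A :&: block k i -> block_of x = i.
Proof. by rewrite in_setI mem_block => /andP [_ /eqP]. Qed.

Lemma card_blocks (A : {set 'I_(nverts k)}) :
  #|A| = (\sum_(i < n.+1) #|A :&: block k i|)%N.
Proof.
rewrite -sum1_card (partition_big block_of xpredT) //=.
apply: eq_bigr => i _; rewrite -sum1_card; apply: eq_bigl => x.
by rewrite inE mem_block.
Qed.

End Blocks.

Section Allowable.
Variables (n : nat) (k : 'I_n.+1 -> nat).
Local Notation pair := ({set 'I_(nverts k)} * {set 'I_n.+1})%type.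

(* The number of vertices of the factor (F_i, e_i), counting the cone vertex when e_i = 1. *)
Definition fsize (p : pair) (i : 'I_n.+1) : nat := #|p.1 :&: block k i| + (i \in p.2).

Definition allowable (p : pair) : bool :=
  [forall i : 'I_n.+1, forall j : 'I_n.+1, ((j < i) && (j \notin p.2)) ==> (fsize p i == 1)].

Lemma tvalid_fsize (p : pair) :
  tvalid p = [forall i, 0 < fsize p i] && (ord_max \notin p.2).
Proof.
congr andb; apply: eq_forallb => i; rewrite /fsize.
by case: (i \in p.2); rewrite ?implybT ?addn1 // addn0 card_gt0 implybF.
Qed.

Lemma fsize_gt0 (a : tbasis k) i : 0 < fsize (val a) i.
Proof. by move: (valP a); rewrite tvalid_fsize => /andP [/forallP]. Qed.

Lemma ord_max_notin_te (a : tbasis k) : ord_max \notin te a.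
Proof. by case/andP: (valP a). Qed.

Lemma block_neq0_notin_te (a : tbasis k) i : i \notin te a -> tF a :&: block k i != set0.
Proof. by move/negbTE=> ie; have := fsize_gt0 a i; rewrite /fsize ie addn0 card_gt0. Qed.

Lemma lead_notin_te (a : tbasis k) : lead a \notin te a.
Proof. by rewrite /lead; case: arg_minnP => //; apply: ord_max_notin_te. Qed.

Lemma leq_lead (a : tbasis k) (j : 'I_n.+1) : j \notin te a -> lead a <= j.
Proof. by rewrite /lead; case: arg_minnP => [|l _ min_l /min_l]; first exact: ord_max_notin_te. Qed.

Lemma mem_te_lt_lead (a : tbasis k) (j : 'I_n.+1) : j < lead a -> j \in te a.
Proof. by apply: contraTT; rewrite -leqNgt; apply: leq_lead. Qed.

Lemma leadE (a : tbasis k) (l : 'I_n.+1) :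
  l \notin te a -> (forall j : 'I_n.+1, j < l -> j \in te a) -> lead a = l.
Proof.
move=> l_notin lt_l; apply/val_inj/eqP; rewrite eqn_leq leq_lead // leqNgt.
by apply: contraL (lead_notin_te a) => /lt_l ->.
Qed.

Lemma allowable_lead (a : tbasis k) :
  allowable (val a) = [forall i : 'I_n.+1, (lead a < i) ==> (fsize (val a) i == 1)].
Proof.
rewrite /allowable; apply/forallP/forallP => allow i.
  apply/implyP => lt_i; move/forallP/(_ (lead a))/implyP: (allow i).
  by rewrite lt_i lead_notin_te; apply.
apply/forallP => j; apply/implyP => /andP [lt_ji j_notin]; apply: (implyP (allow i)).
exact: leq_ltn_trans (leq_lead j_notin) lt_ji.
Qed.

Lemma fsize_allowable (a : tbasis k) (i : 'I_n.+1) :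
  allowable (val a) -> lead a < i -> fsize (val a) i = 1.
Proof. by rewrite allowable_lead => /forallP/(_ i)/implyP fsize1 /fsize1/eqP. Qed.

Lemma ole0_omax x y : ole0 (omax x y) = ole0 x && ole0 y.
Proof. by case: x => [u|]; case: y => [v|] //=; rewrite ?andbT // ge_max. Qed.

Lemma ole0_tnorm (R : pzRingType) l (w : tcochain k R) :
  ole0 (tnorm l w) = [forall a, (w a != 0)%R ==> ole0 (bnorm l a)].
Proof.
by rewrite /tnorm (big_morph ole0 ole0_omax (id2 := None) (erefl true)) big_andE.
Qed.

Lemma ole0_bnorm l (a : tbasis k) :
  ole0 (bnorm l a) =
  ((inord (n - l) : 'I_n.+1) \in te a) || [forall (i : 'I_n.+1 | n - l < i), fsize (val a) i == 1].
Proof.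
rewrite /bnorm; case: ifP => //= _.
have termE i : ((#|tF a :&: block k i|%:Z - 1) + (i \in te a)%:Z = (fsize (val a) i).-1)%R.
  have := fsize_gt0 a i; rewrite /fsize /tF /te.
  case: (i \in (val a).2) => /=; rewrite ?addn1 ?addn0 ?addr0 /= ?subrK //.
  by case: #|_| => // m _; lia.
rewrite (eq_bigr _ (fun i _ => termE i)).
rewrite -(big_morph Posz PoszD (erefl (Posz 0))) lez_nat leqn0 sum_nat_eq0.
by apply: eq_forallb => i; have := fsize_gt0 a i; case: (fsize _ i) => [|[]].
Qed.

Lemma bnorm_le0_allowable (a : tbasis k) :
  (forall l, 1 <= l <= n -> ole0 (bnorm l a)) <-> allowable (val a).
Proof.
rewrite /allowable; split=> [bnorm_le0|/forallP allow l _].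
  apply/forallP => i; apply/forallP => j; apply/implyP => /andP [lt_ji j_notin].
  have lt_jn : j < n by have := ltn_ord i; lia.
  have jE : (inord (n - (n - j)) : 'I_n.+1) = j by apply/val_inj; rewrite /= inordK; lia.
  move: (bnorm_le0 (n - j) ltac:(lia)); rewrite ole0_bnorm jE (negbTE j_notin) /=.
  by move/forallP/(_ i); rewrite subKn ?lt_ji // ltnW.
rewrite ole0_bnorm; case: (boolP (_ \in _)) => //= j_notin.
apply/forallP => i; apply/implyP => lt_i; move/forallP/(_ (inord (n - l))): (allow i).
by rewrite j_notin inordK ?lt_i //; lia.
Qed.

Definition supp_allowable (R : pzRingType) (g : tcochain k R) : Prop :=
  forall b, (g b != 0)%R -> allowable (val b).

Lemma tN0E (R : pzRingType) (w : tcochain k R) :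
  tN0 w <-> supp_allowable w /\ supp_allowable (tcobdry w).
Proof.
have supp_tnorm (g : tcochain k R) :
    supp_allowable g <-> forall l, 1 <= l <= n -> ole0 (tnorm l g).
  split=> [supp_g l l_n|tnorm_le0 b gb].
    by rewrite ole0_tnorm; apply/forallP => b; apply/implyP => /supp_g/bnorm_le0_allowable; apply.
  apply/bnorm_le0_allowable => l /tnorm_le0; rewrite ole0_tnorm.
  by move/forallP/(_ b)/implyP; apply.
rewrite !supp_tnorm; split=> [tN0w|[h1 h2] l l_n]; last by split; [apply: h1|apply: h2].
by split=> l /tN0w [].
Qed.

End Allowable.

Section MuFace.
Variables (n : nat) (k : 'I_n.+1 -> nat).

Lemma mem_mu_face (a : tbasis k) x :
  (x \in mu_face a) = (x \in tF a) && (block_of x <= lead a).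
Proof.
rewrite inE; congr andb; apply/bigcupP/idP => [[j le_j]|le_x].
  by rewrite mem_block => /eqP ->.
by exists (block_of x); rewrite ?mem_block_of.
Qed.

Lemma mu_face_block (a : tbasis k) i :
  mu_face a :&: block k i = if i <= lead a then tF a :&: block k i else set0.
Proof.
apply/setP => x; rewrite in_setI mem_mu_face mem_block.
case: ifP => le_i; last by rewrite in_set0; case: eqP => [->|]; rewrite ?le_i !andbF.
by rewrite in_setI mem_block; case: eqP => [->|]; rewrite ?le_i ?andbT ?andbF.
Qed.

Lemma mu_face_neq0 (a : tbasis k) : mu_face a != set0.
Proof.
apply: contra (block_neq0_notin_te (lead_notin_te a)) => /eqP mu0.
by have := mu_face_block a (lead a); rewrite leqnn mu0 set0I => <-.
Qed.

Lemma leq_lead_mu_face (a b : tbasis k) : mu_face a = mu_face b -> lead a <= lead b.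
Proof.
move=> mu_ab; have /set0Pn [x] := block_neq0_notin_te (lead_notin_te a).
rewrite in_setI mem_block => /andP [x_in /eqP x_lead].
by have := mem_mu_face a x; rewrite mu_ab mem_mu_face x_in x_lead leqnn => /andP [].
Qed.

Lemma lead_mu_face (a b : tbasis k) : mu_face a = mu_face b -> lead a = lead b.
Proof. by move=> mu_ab; apply/val_inj/eqP; rewrite eqn_leq !leq_lead_mu_face. Qed.

Section SameMuFace.
Variables (a b : tbasis k) (i : 'I_n.+1).
Hypotheses (mu_ab : mu_face a = mu_face b) (le_i : i <= lead a).

Lemma block_mu_face : tF a :&: block k i = tF b :&: block k i.
Proof.
have := mu_face_block a i; rewrite le_i mu_ab mu_face_block -(lead_mu_face mu_ab) le_i.
by move=> <-.
Qed.

Lemma mem_te_mu_face : (i \in te a) = (i \in te b).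
Proof.
have lead_ab := lead_mu_face mu_ab; case: (ltngtP i (lead a)) le_i => // [lt_i _|/val_inj -> _].
  by rewrite !mem_te_lt_lead // -lead_ab.
by rewrite (negbTE (lead_notin_te a)) lead_ab (negbTE (lead_notin_te b)).
Qed.

End SameMuFace.

Definition mu_image (a : tbasis k) : face k := Sub (mu_face a) (mu_face_neq0 a).

Lemma card_mu_face (a : tbasis k) :
  #|mu_face a| = (\sum_(i < n.+1 | i <= lead a) #|tF a :&: block k i|)%N.
Proof.
rewrite card_blocks [RHS]big_mkcond; apply: eq_bigr => i _.
by rewrite mu_face_block; case: ifP; rewrite ?cards0.
Qed.

Lemma sum_cdim (a : tbasis k) :
  (\sum_(i < n.+1) cdim a i =
   (#|mu_face a|).-1 + \sum_(i < n.+1 | lead a < i) (fsize (val a) i).-1)%N.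
Proof.
have cdimE i : cdim a i = (fsize (val a) i).-1 by [].
rewrite (bigID (fun i : 'I_n.+1 => i <= lead a)) /= -[sval a]/(val a).
rewrite [in X in (_ + X)%N](eq_bigl (fun i : 'I_n.+1 => lead a < i)) => [|i]; last first.
  by rewrite ltnNge.
rewrite [in X in (_ + X)%N](eq_bigr _ (fun i _ => cdimE i)).
suff -> : (\sum_(i < n.+1 | i <= lead a) cdim a i = (#|mu_face a|).-1)%N by [].
have lead_gt0 : 0 < #|tF a :&: block k (lead a)|.
  by rewrite card_gt0; apply: block_neq0_notin_te (lead_notin_te a).
rewrite card_mu_face (bigD1 (lead a)) // [in RHS](bigD1 (lead a)) //=.
rewrite {1}/cdim (negbTE (lead_notin_te a)) addn0.
rewrite (eq_bigr (fun i => #|tF a :&: block k i|)); first by rewrite -!subn1 addnBAC.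
move=> i /andP [le_i ne_i].
by rewrite /cdim mem_te_lt_lead ?addn1 // ltn_neqAle ne_i.
Qed.

Lemma mu_dim_allowable (a : tbasis k) :
  ((\sum_(i < n.+1) cdim a i)%N == #|mu_face a|.-1) = allowable (val a).
Proof.
rewrite sum_cdim -[X in (_ == X)]addn0 eqn_add2l sum_nat_eq0 allowable_lead.
by apply: eq_forallb => i; have := fsize_gt0 a i; case: (fsize _ i) => [|[]].
Qed.

Lemma mu_starE (R : pzRingType) (v : cochain k R) (a : tbasis k) :
  mu_star v a = if allowable (val a) then v (mu_image a) else 0%R.
Proof.
rewrite ffunE /mu_coef mu_dim_allowable; case: ifP => _; last first.
  by rewrite big1 // => G _; rewrite andbF mul0r.
rewrite (bigD1 (mu_image a)) //= eqxx mul1r big1 ?addr0 // => G ne_G.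
by case: eqP => [muG|]; rewrite ?mul0r //; case/eqP: ne_G; apply: val_inj.
Qed.

Lemma supp_allowable_mu_star (R : pzRingType) (v : cochain k R) :
  supp_allowable (mu_star v).
Proof. by move=> b; rewrite mu_starE; case: ifP; rewrite ?eqxx. Qed.

End MuFace.

Section Coboundary.
Variables (n : nat) (k : 'I_n.+1 -> nat) (R : pzRingType).
Local Notation pair := ({set 'I_(nverts k)} * {set 'I_n.+1})%type.
Local Open Scope ring_scope.

(* [0] at invalid pairs, so that [tcobdryE] needs no validity side conditions. *)
Definition tcoef (g : tcochain k R) (p : pair) : R :=
  if insub p is Some b then g b else 0.

Lemma tcoef_val (g : tcochain k R) (b : tbasis k) : tcoef g (val b) = g b.
Proof. by rewrite /tcoef valK. Qed.

Lemma tcoef_Sub (g : tcochain k R) (p : pair) (hp : tvalid p) : tcoef g p = g (Sub p hp).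
Proof. by rewrite -tcoef_val SubK. Qed.

Lemma pairE (b : tbasis k) : (tF b, te b) = val b.
Proof. by rewrite /tF /te -surjective_pairing. Qed.

Lemma tcoef_notallowable (g : tcochain k R) (p : pair) :
  supp_allowable g -> ~~ allowable p -> tcoef g p = 0.
Proof.
move=> supp_g; rewrite /tcoef; case: insubP => // b _ <-.
by apply: contraNeq => /supp_g.
Qed.

Lemma sum_select (g : tcochain k R) A E (s : R) :
  \sum_(b : tbasis k) (if (tF b == A) && (te b == E) then s else 0) * g b = s * tcoef g (A, E).
Proof.
have selE b : ((tF b == A) && (te b == E)) = (val b == (A, E)) by rewrite -pairE xpair_eqE.
under eq_bigr do rewrite selE.
rewrite /tcoef; case: insubP => [b _ bE|invalid].
  rewrite (bigD1 b) //= bE eqxx big1 ?addr0 // => b' ne_b'.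
  by rewrite -bE val_eqE (negbTE ne_b') mul0r.
rewrite big1 ?mulr0 // => b _; case: eqP => [bE|]; last by rewrite mul0r.
by move: invalid; rewrite -bE (valP b).
Qed.

Lemma tcobdryE (g : tcochain k R) (c : tbasis k) :
  tcobdry g c =
  \sum_(i < n.+1) \sum_(x in tF c :&: block k i)
      (-1) ^+ (Defs.prefix c i + pos (tF c :&: block k i) x) * tcoef g (tF c :\ x, te c)
  + \sum_(i < n.+1)
      (if i \in te c then
         (-1) ^+ (Defs.prefix c i + #|tF c :&: block k i|) * tcoef g (tF c, te c :\ i)
       else 0).
Proof.
rewrite ffunE; under eq_bigr do rewrite /tbdry mulrDl.
rewrite big_split /=; congr (_ + _).
  under eq_bigr do rewrite mulr_suml.
  rewrite exchange_big /=; apply: eq_bigr => i _.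
  under eq_bigr do rewrite mulr_suml.
  by rewrite exchange_big /=; apply: eq_bigr => x _; rewrite sum_select.
under eq_bigr do rewrite mulr_suml.
rewrite exchange_big /=; apply: eq_bigr => i _.
case: (boolP (i \in te c)) => [i_in|_]; last by rewrite big1 // => b _; rewrite mul0r.
by rewrite -sum_select; apply: eq_bigr => b _; rewrite andTb.
Qed.

Lemma fsize_setD1F (A : {set 'I_(nverts k)}) E x i :
  fsize (A :\ x, E) i = if x \in A :&: block k i then (fsize (A, E) i).-1 else fsize (A, E) i.
Proof.
rewrite /fsize /= setIDAC; case: ifP => x_in.
  by rewrite (cardsD1 x (A :&: block k i)) x_in.
by rewrite (setDidPl _) // disjoint_sym disjoints1 x_in.
Qed.

Lemma fsize_setD1e (A : {set 'I_(nverts k)}) E j i :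
  fsize (A, E :\ j) i = if (j == i) && (i \in E) then (fsize (A, E) i).-1 else fsize (A, E) i.
Proof.
rewrite /fsize /= in_setD1 (eq_sym i); case: eqP => [<-|_] //=.
by case: (j \in E); rewrite ?addn1 ?addn0.
Qed.

Lemma notallowable (p : pair) (i j : 'I_n.+1) :
  (j < i)%N -> j \notin p.2 -> (fsize p i != 1)%N -> ~~ allowable p.
Proof.
move=> lt_ji j_notin ne1; apply/negP => /forallP /(_ i) /forallP /(_ j).
by rewrite lt_ji j_notin (negbTE ne1).
Qed.

Lemma pos_set1 (x : 'I_(nverts k)) : pos [set x] x = 0%N.
Proof. by apply: eq_card0 => z; rewrite !inE; case: eqP => // ->; rewrite ltnn. Qed.

Lemma pos_set2l (x y : 'I_(nverts k)) : (x < y)%N -> pos [set x; y] x = 0%N.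
Proof.
move=> lt_xy; apply: eq_card0 => z; rewrite !inE.
by case: eqP => [->|_]; case: eqP => [->|_] //=; rewrite ?ltnn // ltnNge ltnW.
Qed.

Lemma pos_set2r (x y : 'I_(nverts k)) : (x < y)%N -> pos [set x; y] y = 1%N.
Proof.
move=> lt_xy; rewrite /pos -(cards1 x); apply: eq_card => z; rewrite !inE.
by case: (z =P x) => [->|_] /=; [rewrite lt_xy | case: eqP => [->|]; rewrite ?ltnn].
Qed.

(* Let [c] fail allowability at block [i0] (behind a block [j0] with [e_j0 = 0]).
   All terms of [dg(c)] coming from other blocks keep [c] non-allowable, so they vanish. *)
Section NotAllowable.
Variables (g : tcochain k R) (c : tbasis k) (i0 j0 : 'I_n.+1).
Hypotheses (supp_g : supp_allowable g) (lt_ji : (j0 < i0)%N) (j0_notin : j0 \notin te c).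

Lemma tcobdry_block : (2 <= fsize (val c) i0)%N ->
  tcobdry g c =
  \sum_(x in tF c :&: block k i0)
      (-1) ^+ (Defs.prefix c i0 + pos (tF c :&: block k i0) x) * tcoef g (tF c :\ x, te c)
  + (if i0 \in te c then
       (-1) ^+ (Defs.prefix c i0 + #|tF c :&: block k i0|) * tcoef g (tF c, te c :\ i0)
     else 0).
Proof.
move=> ge2; have ne1 : (fsize (tF c, te c) i0 != 1)%N by rewrite pairE; lia.
rewrite tcobdryE; congr (_ + _); rewrite (bigD1 i0) //= [X in _ + X]big1 ?addr0 // => i ne_i.
  rewrite big1 // => x; rewrite in_setI mem_block => /andP [_ /eqP x_i].
  rewrite tcoef_notallowable ?mulr0 //; apply: (notallowable lt_ji) => //.
  by rewrite fsize_setD1F in_setI mem_block x_i (negbTE ne_i) andbF.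
case: ifP => // _; rewrite tcoef_notallowable ?mulr0 //.
apply: (notallowable lt_ji); first by rewrite !inE negb_and j0_notin orbT.
by rewrite fsize_setD1e (negbTE ne_i).
Qed.

Lemma tcobdry_fsize_ge3 : (3 <= fsize (val c) i0)%N -> tcobdry g c = 0.
Proof.
move=> ge3; rewrite tcobdry_block 1?ltnW // big1 ?add0r.
  case: ifP => // i0_in; rewrite tcoef_notallowable ?mulr0 //.
  apply: (notallowable lt_ji); first by rewrite !inE negb_and j0_notin orbT.
  by move: ge3; rewrite fsize_setD1e eqxx i0_in pairE /=; lia.
move=> x x_in; rewrite tcoef_notallowable ?mulr0 //.
by apply: (notallowable lt_ji) => //; move: ge3; rewrite fsize_setD1F x_in pairE /=; lia.
Qed.

Lemma tcobdry_vertex_cone x :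
  tF c :&: block k i0 = [set x] -> i0 \in te c ->
  tcobdry g c =
  (-1) ^+ Defs.prefix c i0 * (tcoef g (tF c :\ x, te c) - tcoef g (tF c, te c :\ i0)).
Proof.
move=> cx i0_in; have ge2 : (2 <= fsize (val c) i0)%N by rewrite /fsize -/(tF c) cx cards1 i0_in.
rewrite tcobdry_block // i0_in cx big_set1 pos_set1 cards1 addn0 exprD expr1.
by rewrite mulrN1 mulNr mulrBr.
Qed.

Lemma tcobdry_edge (x y : 'I_(nverts k)) : (x < y)%N ->
  tF c :&: block k i0 = [set x; y] -> i0 \notin te c ->
  tcobdry g c =
  (-1) ^+ Defs.prefix c i0 * (tcoef g (tF c :\ x, te c) - tcoef g (tF c :\ y, te c)).
Proof.
move=> lt_xy cxy i0_notin; have ne_xy : x != y by rewrite neq_ltn lt_xy.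
have ge2 : (2 <= fsize (val c) i0)%N by rewrite /fsize -/(tF c) cxy cards2 ne_xy.
rewrite tcobdry_block // (negbTE i0_notin) addr0 cxy big_setU1 ?inE //= big_set1.
by rewrite pos_set2l // pos_set2r // addn0 exprD expr1 mulrN1 mulNr mulrBr.
Qed.

End NotAllowable.

End Coboundary.

Section AgreeOff.
Variables (n : nat) (k : 'I_n.+1 -> nat).
Local Notation pair := ({set 'I_(nverts k)} * {set 'I_n.+1})%type.

Definition agree_off (i : 'I_n.+1) (p q : pair) : Prop :=
  (forall x, block_of x != i -> (x \in p.1) = (x \in q.1)) /\
  (forall j, j != i -> (j \in p.2) = (j \in q.2)).

Lemma agree_off_sym i p q : agree_off i p q -> agree_off i q p.
Proof. by case=> F e; split=> [x|j] ne; rewrite ?F ?e. Qed.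

Lemma agree_off_trans i p q r : agree_off i p q -> agree_off i q r -> agree_off i p r.
Proof. by case=> F1 e1 [F2 e2]; split=> [x|j] ne; rewrite ?F1 ?e1 ?F2 ?e2. Qed.

Lemma agree_off_setD1F i (A : {set 'I_(nverts k)}) E x :
  block_of x = i -> agree_off i (A :\ x, E) (A, E).
Proof.
move=> x_i; split=> // z ne_z /=; rewrite in_setD1.
by case: eqP => // zx; move: ne_z; rewrite zx x_i eqxx.
Qed.

Lemma agree_off_setD1e i (A : {set 'I_(nverts k)}) E :
  agree_off i (A, E :\ i) (A, E).
Proof. by split=> // j ne_j /=; rewrite in_setD1 ne_j. Qed.

Lemma agree_off_fsize i p q j : agree_off i p q -> j != i -> fsize p j = fsize q j.
Proof.
case=> F e ne_j; rewrite /fsize e //; congr (_ + _); apply: eq_card => x.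
rewrite !in_setI mem_block; case: (boolP (block_of x == j)) => [/eqP x_j|]; last by rewrite !andbF.
by rewrite F // x_j.
Qed.

Lemma agree_off_eq i p q : agree_off i p q ->
  p.1 :&: block k i = q.1 :&: block k i -> (i \in p.2) = (i \in q.2) -> p = q.
Proof.
case=> F e Fi ei; rewrite [p]surjective_pairing [q]surjective_pairing.
congr (_, _); apply/setP; [move=> x | move=> j].
  case: (eqVneq (block_of x) i) => [x_i|]; last exact: F.
  by move/setP/(_ x): Fi; rewrite !in_setI mem_block x_i eqxx !andbT.
by case: (eqVneq j i) => [->|]; last exact: e.
Qed.

Section Twins.
Variables (b1 b2 : tbasis k) (i : 'I_n.+1).
Hypotheses (agree : agree_off i (val b1) (val b2)) (lt_lead : lead b1 < i).
Hypothesis fsize_i : fsize (val b1) i = fsize (val b2) i.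

Lemma lead_agree_off : lead b2 = lead b1.
Proof.
have ne_i j : j <= lead b1 -> j != i by move=> le_j; rewrite neq_ltn (leq_ltn_trans le_j lt_lead).
apply: leadE => [|j lt_j]; first by rewrite -agree.2 ?ne_i ?lead_notin_te.
by rewrite -agree.2 ?ne_i 1?ltnW // mem_te_lt_lead.
Qed.

Lemma allowable_agree_off : allowable (val b1) = allowable (val b2).
Proof.
rewrite !allowable_lead lead_agree_off; apply: eq_forallb => j; congr (_ ==> _).
by case: (eqVneq j i) => [->|ne_j]; rewrite ?fsize_i ?(agree_off_fsize agree ne_j).
Qed.

Lemma mu_face_agree_off : mu_face b1 = mu_face b2.
Proof.
apply/setP => x; rewrite !mem_mu_face lead_agree_off.
case: (boolP (block_of x <= lead b1)) => le_x; rewrite ?andbF ?andbT //.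
by apply: agree.1; rewrite neq_ltn (leq_ltn_trans le_x lt_lead).
Qed.

Lemma mu_star_agree_off (R : pzRingType) (v : cochain k R) : mu_star v b1 = mu_star v b2.
Proof.
rewrite !mu_starE allowable_agree_off; case: ifP => // _; congr (v _).
by apply: val_inj; rewrite /= mu_face_agree_off.
Qed.

End Twins.

End AgreeOff.

Section MuStarAllowable.
Variables (n : nat) (k : 'I_n.+1 -> nat) (R : pzRingType).
Local Notation pair := ({set 'I_(nverts k)} * {set 'I_n.+1})%type.

Lemma tvalid_setD1F (c : tbasis k) x :
  x \in tF c -> 1 < fsize (val c) (block_of x) -> tvalid (tF c :\ x, te c).
Proof.
move=> x_in gt1; rewrite tvalid_fsize ord_max_notin_te andbT; apply/forallP => i.
rewrite fsize_setD1F pairE in_setI mem_block; case: eqP => [<-|_]; rewrite ?andbF ?fsize_gt0 //.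
by rewrite x_in -subn1 subn_gt0.
Qed.

Lemma tvalid_setD1e (c : tbasis k) i :
  1 < fsize (val c) i -> tvalid (tF c, te c :\ i).
Proof.
move=> gt1; rewrite tvalid_fsize /= in_setD1 negb_and ord_max_notin_te orbT andbT.
apply/forallP => j; rewrite fsize_setD1e pairE; case: eqP => [<-|_] /=; last exact: fsize_gt0.
by case: ifP; rewrite ?fsize_gt0 // -subn1 subn_gt0.
Qed.

Lemma fsize2_cases (c : tbasis k) i : fsize (val c) i = 2 ->
  (exists x, tF c :&: block k i = [set x] /\ i \in te c) \/
  (exists x y : 'I_(nverts k), x < y /\ tF c :&: block k i = [set x; y] /\ i \notin te c).
Proof.
rewrite /fsize -/(tF c) -/(te c); case: (boolP (i \in te c)) => i_in /=.
  by rewrite addn1 => -[] /eqP /cards1P [x cx]; left; exists x.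
rewrite addn0 => /eqP /cards2P [x [y [ne_xy cxy]]]; right.
case: (ltngtP x y) => [lt_xy|lt_yx|/val_inj xy]; last by rewrite xy eqxx in ne_xy.
  by exists x, y.
by exists y, x; rewrite setUC.
Qed.

Lemma fsize1_cases (b : tbasis k) i : fsize (val b) i = 1 ->
  (tF b :&: block k i = set0 /\ i \in te b) \/
  (exists x, tF b :&: block k i = [set x] /\ i \notin te b).
Proof.
rewrite /fsize -/(tF b) -/(te b); case: (boolP (i \in te b)) => i_in /=.
  by rewrite addn1 => -[] /eqP; rewrite cards_eq0 => /eqP; left.
by rewrite addn0 => /eqP /cards1P [x bx]; right; exists x.
Qed.

Lemma mu_star_twins (v : cochain k R) (c : tbasis k) (i j : 'I_n.+1) (p q : pair) :
  tvalid p -> tvalid q -> j < i -> j \notin te c ->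
  agree_off i p (val c) -> agree_off i q (val c) -> fsize p i = fsize q i ->
  tcoef (mu_star v) p = tcoef (mu_star v) q.
Proof.
move=> hp hq lt_ji j_notin pc qc fsize_pq.
rewrite (tcoef_Sub _ hp) (tcoef_Sub _ hq); apply: (mu_star_agree_off (i := i)); rewrite ?SubK //.
  exact: agree_off_trans pc (agree_off_sym qc).
apply: (leq_ltn_trans _ lt_ji); apply: leq_lead.
by rewrite /te SubK pc.2 ?neq_ltn ?lt_ji.
Qed.

Lemma tcobdry_mu_star_fsize2 (v : cochain k R) (c : tbasis k) (i0 j0 : 'I_n.+1) :
  j0 < i0 -> j0 \notin te c -> fsize (val c) i0 = 2 -> tcobdry (mu_star v) c = 0%R.
Proof.
move=> lt_ji j0_notin fsize2.
have supp_v : supp_allowable (mu_star v) by apply: supp_allowable_mu_star.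
have block_i0 x : x \in tF c :&: block k i0 -> x \in tF c /\ block_of x = i0.
  by rewrite in_setI mem_block => /andP [? /eqP].
have agree_c := agree_off_setD1F (tF c) (te c); rewrite pairE in agree_c.
case: (fsize2_cases fsize2) => [[x [cx i0_in]]|[x [y [lt_xy [cxy i0_notin]]]]].
  rewrite (tcobdry_vertex_cone supp_v lt_ji j0_notin cx i0_in).
  have [x_in x_i0] : x \in tF c /\ block_of x = i0 by apply: block_i0; rewrite cx set11.
  rewrite (mu_star_twins v (q := (tF c, te c :\ i0)) _ _ lt_ji j0_notin) ?subrr ?mulr0 //.
  - by apply: tvalid_setD1F; rewrite ?x_i0 ?fsize2.
  - by apply: tvalid_setD1e; rewrite fsize2.
  - exact: agree_c.
  - by have := agree_off_setD1e i0 (tF c) (te c); rewrite pairE.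
  - by rewrite fsize_setD1F fsize_setD1e cx set11 eqxx i0_in pairE.
have [x_in x_i0] : x \in tF c /\ block_of x = i0 by apply: block_i0; rewrite cxy !inE eqxx.
have [y_in y_i0] : y \in tF c /\ block_of y = i0.
  by apply: block_i0; rewrite cxy !inE eqxx orbT.
rewrite (tcobdry_edge supp_v lt_ji j0_notin lt_xy cxy i0_notin).
rewrite (mu_star_twins v (q := (tF c :\ y, te c)) _ _ lt_ji j0_notin) ?subrr ?mulr0 //.
- by apply: tvalid_setD1F; rewrite ?x_i0 ?fsize2.
- by apply: tvalid_setD1F; rewrite ?y_i0 ?fsize2.
- exact: agree_c.
- exact: agree_c.
- by rewrite !fsize_setD1F cxy !inE !eqxx orbT.
Qed.

Lemma supp_allowable_tcobdry_mu_star (v : cochain k R) :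
  supp_allowable (tcobdry (mu_star v)).
Proof.
move=> c; apply: contraR => /forallPn [i0 /forallPn [j0]].
rewrite negb_imply => /andP [/andP [lt_ji j0_notin] ne1].
have := fsize_gt0 c i0; case: (ltnP 2 (fsize (val c) i0)) => [ge3 _|le2 gt0].
  by rewrite (tcobdry_fsize_ge3 (@supp_allowable_mu_star _ _ _ v) lt_ji j0_notin ge3).
rewrite (tcobdry_mu_star_fsize2 v lt_ji j0_notin) //.
by move: ne1 le2 gt0; case: fsize => [|[|[|]]].
Qed.

Lemma tN0_mu_star (v : cochain k R) : tN0 (mu_star v).
Proof.
by apply/tN0E; split; [apply: supp_allowable_mu_star | apply: supp_allowable_tcobdry_mu_star].
Qed.

End MuStarAllowable.

(* The allowable lift of a face [G] whose last block is [m]: each block before [m] carries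
   the cone vertex, the blocks after [m] are single points (cone vertices, and the vertex
   [p0] of Delta_n when [m < n]). *)
Section AllowableLift.
Variables (n : nat) (k : 'I_n.+1 -> nat) (G : face k) (m : 'I_n.+1) (p0 : 'I_(nverts k)).
Hypotheses (G_le_m : forall x, x \in val G -> block_of x <= m).
Hypotheses (G_m : exists2 x, x \in val G & block_of x = m) (p0_max : block_of p0 = ord_max).

Definition lift_face : {set 'I_(nverts k)} := if m == ord_max then val G else p0 |: val G.
Definition lift_cone : {set 'I_n.+1} := [set i | (i != m) && (i != ord_max)].

Lemma mem_lift_face x : (x \in lift_face) = (x \in val G) || (m != ord_max) && (x == p0).
Proof. by rewrite /lift_face; case: eqP => _; rewrite ?orbF // in_setU1 orbC. Qed.

Lemma lift_face_block_le (i : 'I_n.+1) : i <= m -> lift_face :&: block k i = val G :&: block k i.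
Proof.
move=> le_i; apply/setP => x; rewrite !in_setI mem_lift_face mem_block.
case: (x =P p0) => [->|_]; last by rewrite andbF orbF.
rewrite p0_max; case: (eqVneq i ord_max) => [ei|ne_i]; last by rewrite !andbF.
have -> : m = ord_max by apply/val_inj; move: le_i (ltn_ord m); rewrite ei /=; lia.
by rewrite eqxx orbF.
Qed.

Lemma lift_face_block_gt (i : 'I_n.+1) : m < i ->
  lift_face :&: block k i = if i == ord_max then [set p0] else set0.
Proof.
move=> lt_i; apply/setP => x; rewrite in_setI mem_lift_face mem_block andb_orl.
have -> : (x \in val G) && (block_of x == i) = false.
  case: (boolP (x \in val G)) => // /G_le_m le_x; apply/eqP => x_i.
  by move: le_x lt_i; rewrite x_i; lia.
rewrite /=; case: (eqVneq x p0) => [->|ne_x]; last first.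
  by rewrite !andbF; case: ifP; rewrite ?in_set1 ?in_set0 ?(negbTE ne_x).
rewrite p0_max andbT; case: (eqVneq i ord_max) => [ei|_] /=; rewrite ?in_set0 ?andbF //.
by rewrite set11 andbT neq_ltn -ei lt_i.
Qed.

Lemma fsize_lift_gt (i : 'I_n.+1) : m < i -> fsize (lift_face, lift_cone) i = 1.
Proof.
move=> lt_i; have ne_im : i != m by rewrite neq_ltn lt_i orbT.
rewrite /fsize /= lift_face_block_gt // inE ne_im /=.
case: (eqVneq i ord_max) => [_|_]; first by rewrite cards1.
by rewrite cards0.
Qed.

Lemma fsize_lift_le (i : 'I_n.+1) : i <= m -> 0 < fsize (lift_face, lift_cone) i.
Proof.
move=> le_i; rewrite /fsize /= inE; case: (eqVneq i m) => [->|ne_i] /=.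
  rewrite addn0 lift_face_block_le // card_gt0; case: G_m => x xG xm.
  by apply/set0Pn; exists x; rewrite in_setI xG mem_block xm eqxx.
have lt_im : i < m by rewrite ltn_neqAle ne_i le_i.
by rewrite addn_gt0 neq_ltn (leq_trans lt_im (leq_ord m)) orbT.
Qed.

Lemma lift_valid : tvalid (lift_face, lift_cone).
Proof.
rewrite tvalid_fsize inE eqxx andbF andbT; apply/forallP => i.
by case: (ltnP m i) => [/fsize_lift_gt ->|/fsize_lift_le].
Qed.

Definition lift : tbasis k := Sub (lift_face, lift_cone) lift_valid.

Lemma lead_lift : lead lift = m.
Proof.
apply: leadE => [|j lt_j]; first by rewrite /te SubK inE eqxx.
by rewrite /te SubK inE !neq_ltn lt_j (leq_trans lt_j (leq_ord m)).
Qed.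

Lemma allowable_lift : allowable (val lift).
Proof.
rewrite allowable_lead lead_lift; apply/forallP => i; apply/implyP => lt_i.
by rewrite SubK fsize_lift_gt.
Qed.

Lemma mu_face_lift : mu_face lift = val G.
Proof.
apply/setP => x; rewrite mem_mu_face lead_lift /tF SubK mem_lift_face.
case: (boolP (x \in val G)) => [/G_le_m -> //|_] /=.
case: (x =P p0) => [->|]; rewrite ?andbF //= p0_max andbT.
case: (eqVneq m ord_max) => //= ne_m; apply/negP => le_m; case/eqP: ne_m.
by apply/val_inj/eqP; rewrite eqn_leq le_m leq_ord.
Qed.

End AllowableLift.

Lemma exists_allowable_mu_image (n : nat) (k : 'I_n.+1 -> nat) (regular : 0 < k ord_max)
    (G : face k) : exists2 a : tbasis k, allowable (val a) & mu_image a = G.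
Proof.
have [x0 x0G] : exists x, x \in val G by apply/set0Pn; exact: (valP G).
have [p0 p0_max] := exists_mem_block regular; rewrite mem_block in p0_max.
case: (arg_maxnP (fun x => block_of x : nat) x0G) => x1 x1G G_le.
exists (lift (m := block_of x1) G_le (ex_intro2 _ _ x1 x1G erefl) (eqP p0_max)).
  exact: allowable_lift.
by apply: val_inj; rewrite /= mu_face_lift.
Qed.

Lemma signr_mulr_eq0 (R : pzRingType) m (x : R) : ((-1) ^+ m * x = 0 -> x = 0)%R.
Proof. by move=> /(congr1 ( *%R ((-1) ^+ m)))%R; rewrite signrMK mulr0. Qed.

Section OneBlockChange.
Variables (n : nat) (k : 'I_n.+1 -> nat) (R : pzRingType) (w : tcochain k R).
Hypotheses (supp_w : supp_allowable w) (supp_dw : supp_allowable (tcobdry w)).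
Local Notation pair := ({set 'I_(nverts k)} * {set 'I_n.+1})%type.

Lemma tcoef_agree_off (b : tbasis k) (p : pair) i : agree_off i p (val b) ->
  p.1 :&: block k i = tF b :&: block k i -> (i \in p.2) = (i \in te b) -> tcoef w p = w b.
Proof. by move=> agree Fi ei; rewrite (agree_off_eq agree Fi ei) tcoef_val. Qed.

(* Two elements differing only in a block [i] beyond the leading one, where both are a single
   point, are the two faces of their union [c]; as [c] is not allowable, [(dw)(c) = 0]. *)
Section Union.
Variables (a a' : tbasis k) (i : 'I_n.+1).
Hypotheses (agree : agree_off i (val a) (val a')) (lt_lead : lead a < i).

Definition union_pair : pair := (tF a :|: tF a', te a :|: te a').

Lemma union_valid : tvalid union_pair.
Proof.
rewrite tvalid_fsize /union_pair /= in_setU negb_or !ord_max_notin_te !andbT.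
apply/forallP => j.
apply: leq_trans (fsize_gt0 a j) _; rewrite /fsize /= leq_add //.
  by rewrite subset_leq_card // setSI // subsetUl.
by rewrite in_setU; case: (j \in te a).
Qed.

Let c : tbasis k := Sub union_pair union_valid.

Lemma agree_off_union : agree_off i (val c) (val a).
Proof.
case: agree => F e; rewrite SubK; split=> [x ne_x | j ne_j] /=; rewrite in_setU.
  by rewrite -F ?orbb.
by rewrite -e ?orbb.
Qed.

Lemma lead_notin_union : lead a \notin te c.
Proof. by rewrite /te agree_off_union.2 ?lead_notin_te // neq_ltn lt_lead. Qed.

Lemma tcobdry_union : fsize (val c) i = 2 -> tcobdry w c = 0%R.
Proof.
move=> fsize2; apply/eqP/negPn/negP => /supp_dw; apply/negP.
by apply: (notallowable lt_lead lead_notin_union); rewrite fsize2.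
Qed.

Lemma union_block : tF c :&: block k i = (tF a :&: block k i) :|: (tF a' :&: block k i).
Proof. by rewrite /tF SubK setIUl. Qed.

Lemma mem_te_union : (i \in te c) = (i \in te a) || (i \in te a').
Proof. by rewrite /te SubK in_setU. Qed.

Lemma eq_cone_vertex y : tF a :&: block k i = set0 -> i \in te a ->
  tF a' :&: block k i = [set y] -> i \notin te a' -> w a = w a'.
Proof.
move=> a0 i_in a'y i_notin'.
have cy : tF c :&: block k i = [set y] by rewrite union_block a0 a'y set0U.
have i_in_c : i \in te c by rewrite mem_te_union i_in.
have y_i : block_of y = i by apply: (block_of_setI (A := tF c)); rewrite cy set11.
have := tcobdry_union; rewrite (tcobdry_vertex_cone supp_w lt_lead lead_notin_union cy i_in_c).
rewrite /fsize -/(tF c) -/(te c) cy cards1 i_in_c => /(_ erefl) /signr_mulr_eq0 /eqP.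
rewrite subr_eq0 => /eqP.
rewrite (tcoef_agree_off (b := a) (i := i)) ?(tcoef_agree_off (b := a') (i := i)) //=.
- apply: agree_off_trans (agree_off_setD1e _ _ _) _; rewrite pairE.
  exact: agree_off_trans agree_off_union agree.
- by rewrite a'y.
- by rewrite in_setD1 eqxx (negbTE i_notin').
- by apply: agree_off_trans (agree_off_setD1F _ _ y_i) _; rewrite pairE; exact: agree_off_union.
- by rewrite setIDAC cy setDv a0.
- by rewrite i_in_c i_in.
Qed.

Lemma eq_vertex_vertex (x y : 'I_(nverts k)) : (x < y)%N ->
  tF a :&: block k i = [set x] -> i \notin te a ->
  tF a' :&: block k i = [set y] -> i \notin te a' -> w a = w a'.
Proof.
move=> lt_xy ax i_notin a'y i_notin'.
have cxy : tF c :&: block k i = [set x; y] by rewrite union_block ax a'y.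
have i_notin_c : i \notin te c by rewrite mem_te_union negb_or i_notin.
have x_i : block_of x = i by apply: (block_of_setI (A := tF a)); rewrite ax set11.
have y_i : block_of y = i by apply: (block_of_setI (A := tF a')); rewrite a'y set11.
have ne_xy : x != y by rewrite neq_ltn lt_xy.
have := tcobdry_union; rewrite (tcobdry_edge supp_w lt_lead lead_notin_union lt_xy cxy i_notin_c).
rewrite /fsize -/(tF c) -/(te c) cxy cards2 ne_xy (negbTE i_notin_c).
move=> /(_ erefl) /signr_mulr_eq0 /eqP; rewrite subr_eq0 => /eqP.
rewrite (tcoef_agree_off (b := a') (i := i)) ?(tcoef_agree_off (b := a) (i := i)) //=.
- by apply: agree_off_trans (agree_off_setD1F _ _ y_i) _; rewrite pairE; exact: agree_off_union.
- rewrite setIDAC cxy ax; apply/setP => z; rewrite !inE.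
  by case: (eqVneq z y) => [->|]; rewrite ?orbF // eq_sym (negbTE ne_xy).
- by rewrite (negbTE i_notin_c) (negbTE i_notin).
- apply: agree_off_trans (agree_off_setD1F _ _ x_i) _; rewrite pairE.
  exact: agree_off_trans agree_off_union agree.
- rewrite setIDAC cxy a'y; apply/setP => z; rewrite !inE.
  by case: (eqVneq z x) => [->|]; rewrite ?(negbTE ne_xy).
- by rewrite (negbTE i_notin_c) (negbTE i_notin').
Qed.

End Union.

Lemma eq_agree_off_fsize1 (a a' : tbasis k) (i : 'I_n.+1) :
  agree_off i (val a) (val a') -> lead a < i ->
  fsize (val a) i = 1 -> fsize (val a') i = 1 -> w a = w a'.
Proof.
move=> agree lt_lead fa fa'; have agree' := agree_off_sym agree.
have lt_lead' : lead a' < i by rewrite (lead_agree_off agree lt_lead) ?fa ?fa'.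
case: (fsize1_cases fa) => [[a0 i_in]|[x [ax i_notin]]];
  case: (fsize1_cases fa') => [[a'0 i_in']|[y [a'y i_notin']]].
- by congr (w _); apply/val_inj/(agree_off_eq agree); rewrite ?a0 ?a'0 ?i_in ?i_in'.
- exact: eq_cone_vertex a'y i_notin'.
- by apply/esym; apply: (eq_cone_vertex agree' lt_lead' a'0 i_in' ax i_notin).
- case: (ltngtP x y) => [lt_xy|lt_yx|/val_inj xy].
  + exact: eq_vertex_vertex lt_xy ax i_notin a'y i_notin'.
  + by apply/esym; apply: (eq_vertex_vertex agree' lt_lead' lt_yx a'y i_notin' ax i_notin).
  + congr (w _); apply/val_inj/(agree_off_eq agree); first by rewrite ax a'y xy.
    by rewrite (negbTE i_notin) (negbTE i_notin').
Qed.

End OneBlockChange.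

Section Splice.
Variables (n : nat) (k : 'I_n.+1 -> nat).
Local Notation pair := ({set 'I_(nverts k)} * {set 'I_n.+1})%type.

Definition splice (p q : pair) (j : nat) : pair :=
  ([set x | if block_of x < j then x \in q.1 else x \in p.1],
   [set i : 'I_n.+1 | if i < j then i \in q.2 else i \in p.2]).

Lemma mem_splice1 p q j x :
  (x \in (splice p q j).1) = if block_of x < j then x \in q.1 else x \in p.1.
Proof. by rewrite inE. Qed.

Lemma mem_splice2 p q j (i : 'I_n.+1) :
  (i \in (splice p q j).2) = if i < j then i \in q.2 else i \in p.2.
Proof. by rewrite inE. Qed.

Lemma fsize_splice p q j (i : 'I_n.+1) :
  fsize (splice p q j) i = if i < j then fsize q i else fsize p i.
Proof.
rewrite /fsize /= inE; case: ifP => lt_ij; congr (_ + _); apply: eq_card => x;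
  by rewrite !in_setI inE mem_block; case: eqP => [->|]; rewrite ?lt_ij ?andbF.
Qed.

Lemma splice0 p q : splice p q 0 = p.
Proof. by rewrite [p in RHS]surjective_pairing; congr (_, _); apply/setP => ?; rewrite inE. Qed.

Lemma splice_all p q : splice p q n.+1 = q.
Proof.
rewrite [q in RHS]surjective_pairing; congr (_, _); apply/setP => ?; first by rewrite inE ltn_ord.
by rewrite inE ltn_ord.
Qed.

Lemma agree_off_splice p q (j : 'I_n.+1) : agree_off j (splice p q j) (splice p q j.+1).
Proof.
split=> [x|i] ne /=; rewrite !inE ltnS.
  by rewrite (leq_eqVlt (block_of x)) (negbTE (ne : (block_of x : nat) != j)).
by rewrite (leq_eqVlt i) (negbTE (ne : (i : nat) != j)).
Qed.

Section SpliceBasis.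
Variables (a b : tbasis k).
Hypothesis mu_ab : mu_face a = mu_face b.

Lemma splice_valid j : tvalid (splice (val a) (val b) j).
Proof.
rewrite tvalid_fsize inE; apply/andP; split; last by case: ifP; rewrite ord_max_notin_te.
by apply/forallP => i; rewrite fsize_splice; case: ifP; rewrite fsize_gt0.
Qed.

Definition spliceb j : tbasis k := Sub _ (splice_valid j).

Lemma mem_te_spliceb j (i : 'I_n.+1) : i <= lead a -> (i \in te (spliceb j)) = (i \in te a).
Proof. by move=> le_i; rewrite /te SubK inE -(mem_te_mu_face mu_ab le_i); case: ifP. Qed.

Lemma lead_spliceb j : lead (spliceb j) = lead a.
Proof.
apply: leadE => [|i lt_i]; first by rewrite mem_te_spliceb ?lead_notin_te.
by rewrite mem_te_spliceb ?mem_te_lt_lead // ltnW.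
Qed.

End SpliceBasis.
End Splice.

Section Connected.
Variables (n : nat) (k : 'I_n.+1 -> nat) (R : pzRingType) (w : tcochain k R).
Hypotheses (supp_w : supp_allowable w) (supp_dw : supp_allowable (tcobdry w)).
Variables (a b : tbasis k).
Hypotheses (allow_a : allowable (val a)) (allow_b : allowable (val b)).
Hypothesis mu_ab : mu_face a = mu_face b.

Lemma eq_spliceb_succ (j : 'I_n.+1) : w (spliceb a b j) = w (spliceb a b j.+1).
Proof.
have agree : agree_off j (val (spliceb a b j)) (val (spliceb a b j.+1)).
  by rewrite !SubK; apply: agree_off_splice.
case: (leqP j (lead a)) => [le_j|lt_j].
  congr (w _); apply/val_inj/(agree_off_eq agree); rewrite !SubK.
    apply/setP => x; rewrite !in_setI !mem_splice1.
    case: (eqVneq (block_of x) j) => [xj|]; last by rewrite mem_block => /negbTE ->; rewrite !andbF.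
    move/setP/(_ x): (block_mu_face mu_ab le_j).
    by rewrite !in_setI mem_block xj eqxx ltnn ltnSn !andbT /= => ->.
  by rewrite !mem_splice2 ltnn ltnSn; exact: (mem_te_mu_face mu_ab le_j).
apply: (eq_agree_off_fsize1 supp_w supp_dw agree); first by rewrite lead_spliceb.
  by rewrite SubK fsize_splice ltnn fsize_allowable.
by rewrite SubK fsize_splice ltnSn fsize_allowable // -(lead_mu_face mu_ab).
Qed.

Lemma eq_allowable_mu_face : w a = w b.
Proof.
have spliceb0 : spliceb a b 0 = a by apply/val_inj; rewrite SubK splice0.
have spliceb_all : spliceb a b n.+1 = b by apply/val_inj; rewrite SubK splice_all.
have splice_chain j : j <= n.+1 -> w a = w (spliceb a b j).
  elim: j => [_|j IH lt_j]; first by rewrite spliceb0.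
  by rewrite IH 1?ltnW //; exact: (eq_spliceb_succ (Ordinal lt_j)).
by rewrite (splice_chain n.+1) // spliceb_all.
Qed.

End Connected.

Lemma mu_star_inj (n : nat) (k : 'I_n.+1 -> nat) (R : pzRingType) :
  0 < k ord_max -> injective (@mu_star n k R).
Proof.
move=> regular v1 v2 eq_v; apply/ffunP => G.
have [a allow_a <-] := exists_allowable_mu_image regular G.
by have := congr1 (fun g : tcochain k R => g a) eq_v; rewrite !mu_starE allow_a.
Qed.

Lemma tN0_mu_star_image (n : nat) (k : 'I_n.+1 -> nat) (R : pzRingType) (w : tcochain k R) :
  tN0 w -> exists v : cochain k R, mu_star v = w.
Proof.
move=> /tN0E [supp_w supp_dw].
pose v : cochain k R := [ffun G => if [pick a | allowable (val a) && (mu_image a == G)] is Some a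
                                   then w a else 0%R].
exists v; apply/ffunP => a; rewrite mu_starE ffunE.
case: ifPn => [allow_a|not_a].
  case: pickP => [a' /andP [allow_a' /eqP mu_a'] | none]; last first.
    by have := none a; rewrite allow_a eqxx.
  apply: eq_allowable_mu_face => //.
  by rewrite -[mu_face a']/(val (mu_image a')) mu_a'.
by case: (eqVneq (w a) 0%R) => // /supp_w; rewrite (negbTE not_a).
Qed.

Unset Implicit Arguments.
Local Open Scope ring_scope.

Theorem mainTheorem3 (R : comPzRingType) (n : nat) (k : 'I_n.+1 -> nat)
    (regular : (0 < k ord_max)%N) :
  injective (@mu_star n k R) /\
  (forall w : tcochain k R, (exists v : cochain k R, mu_star v = w) <-> tN0 w).
Proof.
split; first exact: mu_star_inj.
by move=> w; split=> [[v <-]|]; [apply: tN0_mu_star | apply: tN0_mu_star_image].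
Qed.
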